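(* Let $d\geq 3$ and $n\geq 1$ be integers, let $1\leq l\leq n$, let $v_1,\dots,v_l\in\mathbb R^n$ be orthonormal, and let $\lambda_1,\dots,\lambda_l\in\mathbb R$ be nonzero. Let $T=\sum_{i=1}^l\lambda_i v_i^{\otimes d}\in S^d(\mathbb R^n)$, i.e. $f_T(x)=\sum_{i=1}^l\lambda_i(v_i\cdot x)^d$. Let $V\in\mathbb R^{l\times n}$ be the matrix with rows $v_1,\dots,v_l$, and fix for each $i$ a $(d-2)$-nd root $\lambda_i^{1/(d-2)}\in\mathbb C$ of $\lambda_i$ (write $\lambda_i^{-1/(d-2)}$ for its inverse). For every $k\in\{1,\dots,l\}$, every subset $\mathcal I=\{i_1<i_2<\dots<i_k\}\subseteq\{1,\dots,l\}$ and every $(k-1)$-tuple $(\eta_1,\dots,\eta_{k-1})$ of $(d-2)$-nd roots of unity, define $y\in\mathbb C^l$ by $$y_i=\begin{cases}\eta_j\lambda_{i_j}^{-1/(d-2)} & \text{if } i=i_j,\ j\in\{1,\dots,k-1\},\\ \lambda_{i_k}^{-1/(d-2)} & \text{if } i=i_k,\\ 0 & \text{if } i\notin\mathcal I,\end{cases}$$ and $w=V^Ty\in\mathbb C^n$. Then each such $w$ is an eigenvector of $T$; these vectors $w$ are, up to scaling, $\frac{(d-1)^l-1}{d-2}$ distinct eigenvectors of $T$ in $\mathbb C^n$; and every eigenvector of $T$ is, up to scaling, either one of these vectors $w$ or a nonzero element of the nullspace of $V$ (and every nonzero element of the nullspace of $V$ is an eigenvector of $T$).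
   Context: $S^d(\mathbb R^n)$ (resp. $S^d(\mathbb C^n)$) denotes the space of real (resp. complex) symmetric tensors of order $d$ and dimension $n$, i.e. arrays $(T_{i_1\dots i_d})_{i_j\in\{1,\dots,n\}}$ invariant under permutation of indices. The associated polynomial is $f_T(x)=\sum_{i_1,\dots,i_d}T_{i_1\dots i_d}x_{i_1}\cdots x_{i_d}$. A nonzero vector $w\in\mathbb C^n$ is an eigenvector of $T$ if there is $\lambda\in\mathbb C$ with $Tw^{d-1}=\lambda w$, where $(Tw^{d-1})_i=\sum_{i_2,\dots,i_d}T_{i,i_2,\dots,i_d}w_{i_2}\cdots w_{i_d}$; equivalently $\nabla f_T(w)$ and $w$ are parallel. Eigenvectors are counted up to nonzero scaling. *)

From HB Require Import structures.
From mathcomp Require Import all_boot all_order all_algebra.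
From mathcomp Require Import reals complex.
Set Implicit Arguments. Unset Strict Implicit. Unset Printing Implicit Defensive.
Import Order.TTheory GRing.Theory Num.Theory.
Local Open Scope ring_scope.

Section Defs.
Variable R : realType.
Local Notation C := R[i].

Definition rc (x : R) : C := (x%:C)%C.

(* A (symmetric) tensor of order d and dimension n is represented by its
   entries T (i_1 :: ... :: i_d), for index sequences of length d. *)
Definition rank1_sum_tensor l n (lam : 'I_l -> R) (V : 'M[R]_(l, n))
  (s : seq 'I_n) : R :=
  \sum_(i < l) lam i * \prod_(a <- s) V i a.

(* (T w^{d-1})_a = sum_{i_2..i_d} T_{a i_2 .. i_d} w_{i_2} ... w_{i_d} *)
Definition tensor_apply (d n : nat) (T : seq 'I_n -> R) (w : 'I_n -> C)
  (a : 'I_n) : C :=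
  \sum_(t : (d.-1).-tuple 'I_n) rc (T (a :: val t)) * \prod_(b <- t) w b.

Definition is_eigenvector (d n : nat) (T : seq 'I_n -> R) (w : 'I_n -> C) :=
  (exists a, w a != 0) /\
  exists mu : C, forall a, tensor_apply d T w a = mu * w a.

Definition parallel n (w w' : 'I_n -> C) :=
  exists c : C, c != 0 /\ forall a, w' a = c * w a.

Definition in_nullspace l n (V : 'M[R]_(l, n)) (w : 'I_n -> C) :=
  forall i : 'I_l, \sum_(a < n) rc (V i a) * w a = 0.

(* admissible data: k in {1..l}, I = {iota 0 < ... < iota (k-1)},
   eta_0 .. eta_{k-2} are (d-2)-nd roots of unity (0-based indexing). *)
Definition admissible (d l k : nat) (iota : 'I_k -> 'I_l) (eta : nat -> C) :=
  [/\ (1 <= k <= l)%N,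
      (forall j j' : 'I_k, (j < j')%N -> (iota j < iota j')%N) &
      (forall j : nat, (j < k.-1)%N -> eta j ^+ (d - 2) = 1)].

(* y_i = eta_j * r_{i_j}^{-1} if i = i_j (j < k), r_{i_k}^{-1} if i = i_k,
   0 otherwise; here r i is the fixed (d-2)-nd root of lam_i. *)
Definition yvec l (r : 'I_l -> C) k (iota : 'I_k -> 'I_l) (eta : nat -> C)
  (i : 'I_l) : C :=
  \sum_(j < k | iota j == i)
     (if (j < k.-1)%N then eta j else 1) * (r (iota j))^-1.

Definition wvec l n (V : 'M[R]_(l, n)) (r : 'I_l -> C) k
  (iota : 'I_k -> 'I_l) (eta : nat -> C) (a : 'I_n) : C :=
  \sum_(i < l) rc (V i a) * yvec r iota eta i.

End Defs.

(* Write z = V w.  Since the rows of V are orthonormal, the eigen-equation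
   T w^(d-1) = mu w reads V^T (lam_i z_i^(d-1))_i = mu w, hence
   lam_i z_i^(d-1) = mu z_i.  If mu = 0 then z = 0, i.e. w lies in the
   nullspace of V; otherwise w = V^T z and lam_i z_i^(d-2) = mu on the support
   of z.  Rescaling z so that its last nonzero coordinate z_p becomes
   lam_p^(-1/(d-2)) turns every other nonzero coordinate into a (d-2)-nd root
   of unity times lam_i^(-1/(d-2)): these normalized coefficient vectors are
   exactly the y of the statement, and each scaling class contains at most one
   of them.  They are counted by the position p of the last nonzero
   coordinate and a choice among 0 and the d-2 roots of unity at each earlier
   position: sum_p (d-1)^p = ((d-1)^l - 1)/(d-2). *)

From HB Require Import structures.
From mathcomp Require Import all_boot all_order all_algebra separable cyclotomic.
From mathcomp Require Import reals complex ring zify.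
From Stdlib Require Import FunctionalExtensionality.
Set Implicit Arguments. Unset Strict Implicit. Unset Printing Implicit Defensive.
Import Order.TTheory GRing.Theory Num.Theory.
Local Open Scope ring_scope.

Section TensorEigenvectors.
Variable R : realType.
Local Notation C := R[i].

Lemma rc_eq0 (x : R) : (rc x == 0) = (x == 0).
Proof. by rewrite /rc fmorph_eq0. Qed.

Lemma sum_tuple_prod n k (x : 'I_n -> C) :
  \sum_(t : k.-tuple 'I_n) \prod_(b <- t) x b = (\sum_b x b) ^+ k.
Proof.
rewrite -[k in RHS]card_ord -prodr_const bigA_distr_bigA /=.
rewrite (reindex (fun f : {ffun 'I_k -> 'I_n} => [tuple f i | i < k])) /=.
  by apply: eq_bigr => f _; rewrite big_map big_enum.
exists (fun t : k.-tuple 'I_n => [ffun i => tnth t i]) => [f _|t _].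
  by apply/ffunP => i; rewrite ffunE tnth_mktuple.
by apply: eq_from_tnth => i; rewrite tnth_mktuple ffunE.
Qed.

Definition proj_rows l n (V : 'M[R]_(l, n)) (w : 'I_n -> C) (i : 'I_l) : C :=
  \sum_(a < n) rc (V i a) * w a.

Definition comb_rows l n (V : 'M[R]_(l, n)) (y : 'I_l -> C) (a : 'I_n) : C :=
  \sum_(i < l) rc (V i a) * y i.

Lemma proj_rowsZ l n (V : 'M[R]_(l, n)) (c : C) w i :
  proj_rows V (fun a => c * w a) i = c * proj_rows V w i.
Proof. by rewrite /proj_rows big_distrr; apply: eq_bigr => a _; rewrite mulrCA. Qed.

Lemma comb_rowsZ l n (V : 'M[R]_(l, n)) (c : C) y a :
  comb_rows V (fun i => c * y i) a = c * comb_rows V y a.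
Proof. by rewrite /comb_rows big_distrr; apply: eq_bigr => i _; rewrite mulrCA. Qed.

Lemma eq_comb_rows l n (V : 'M[R]_(l, n)) y y' :
  y =1 y' -> comb_rows V y = comb_rows V y'.
Proof.
move=> eq_y; apply: functional_extensionality => a.
by apply: eq_bigr => i _; rewrite eq_y.
Qed.

Lemma tensor_apply_rank1_sum d l n (lam : 'I_l -> R) (V : 'M[R]_(l, n)) w :
  tensor_apply d (rank1_sum_tensor lam V) w =1
  comb_rows V (fun i => rc (lam i) * proj_rows V w i ^+ d.-1).
Proof.
move=> a; rewrite /tensor_apply.
under eq_bigr do rewrite /rank1_sum_tensor /rc rmorph_sum big_distrl /=.
rewrite exchange_big /=; apply: eq_bigr => i _.
rewrite /proj_rows -sum_tuple_prod !big_distrr /=; apply: eq_bigr => t _.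
by rewrite big_cons !rmorphM /= rmorph_prod big_split /= /rc; ring.
Qed.

Section OrthonormalRows.
Variables (l n : nat) (V : 'M[R]_(l, n)).
Hypothesis V_orth : V *m V^T = 1%:M.

Lemma dot_rowsC i j : \sum_a rc (V i a) * rc (V j a) = (i == j)%:R.
Proof.
have := congr1 (fun M : 'M[R]_l => M i j) V_orth; rewrite !mxE => dotVij.
rewrite /rc -(rmorph_nat (real_complex R)) -dotVij rmorph_sum.
by apply: eq_bigr => a _; rewrite mxE rmorphM.
Qed.

Lemma proj_comb_rows y : proj_rows V (comb_rows V y) =1 y.
Proof.
move=> j; rewrite /proj_rows /comb_rows.
under eq_bigr do rewrite big_distrr.
rewrite exchange_big /= (bigD1 j) //= [X in _ + X]big1 => [|i ij].
  rewrite addr0 (eq_bigr (fun a => rc (V j a) * rc (V j a) * y j)) => [|a _].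
    by rewrite -big_distrl /= dot_rowsC eqxx mul1r.
  by rewrite mulrA.
rewrite (eq_bigr (fun a => rc (V j a) * rc (V i a) * y i)) => [|a _].
  by rewrite -big_distrl /= dot_rowsC eq_sym (negbTE ij) mul0r.
by rewrite mulrA.
Qed.

Lemma comb_rows_neq0 y : (exists i, y i != 0) -> exists a, comb_rows V y a != 0.
Proof.
move=> [i yi]; apply/existsP; apply: contraNT yi; rewrite negb_exists => /forallP y0.
rewrite -proj_comb_rows /proj_rows big1 // => a _.
by rewrite (eqP (negbNE (y0 a))) mulr0.
Qed.

Lemma parallel_comb_rows y y' : parallel (comb_rows V y) (comb_rows V y') ->
  exists2 c : C, c != 0 & forall i, y' i = c * y i.
Proof.
move=> [c [c0 eq_w]]; exists c => // i.
rewrite -(proj_comb_rows y') -(proj_comb_rows y) -proj_rowsZ.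
by apply: eq_bigr => a _; rewrite eq_w.
Qed.

End OrthonormalRows.

Lemma last_nonzero_unique l (y : 'I_l -> C) (p p' : 'I_l) :
  y p != 0 -> (forall i : 'I_l, (p < i)%N -> y i = 0) ->
  y p' != 0 -> (forall i : 'I_l, (p' < i)%N -> y i = 0) -> p = p'.
Proof.
move=> yp yp_last yp' yp'_last; apply: val_inj.
case: (ltngtP p p') => // [/yp_last|/yp'_last] /eqP.
  by rewrite (negbTE yp').
by rewrite (negbTE yp).
Qed.

Lemma mul_eq1_neq0 (x c : C) : x * c = 1 -> x != 0.
Proof.
by move=> xc1; apply: contra_eq_neq xc1 => ->; rewrite mul0r eq_sym oner_eq0.
Qed.

Lemma geometric_sumn m l : (m * \sum_(p < l) m.+1 ^ p = m.+1 ^ l - 1)%N.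
Proof.
elim: l => [|l IHl]; first by rewrite big_ord0 muln0 expn0.
rewrite big_ord_recr /= mulnDr IHl expnS.
have : (0 < m.+1 ^ l)%N by rewrite expn_gt0.
set x := (m.+1 ^ l)%N; nia.
Qed.

Lemma unity_roots_with0 m : (0 < m)%N -> exists s : seq C,
  [/\ uniq s, size s = m.+1 & forall x, (x \in s) = (x == 0) || (x ^+ m == 1)].
Proof.
move=> m_gt0; have [rs Xm1E] := closed_field_poly_normal ('X^m - 1 : {poly C}).
rewrite (monicP (monicXnsubC 1 m_gt0)) scale1r in Xm1E.
have root_Xm1 x : root ('X^m - 1) x = (x ^+ m == 1) := unity_rootE m x.
have mem_rs x : (x \in rs) = (x ^+ m == 1).
  by rewrite -root_prod_XsubC -Xm1E root_Xm1.
exists (0 :: rs); split.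
- rewrite cons_uniq mem_rs expr0n eqn0Ngt m_gt0 eq_sym oner_eq0 /=.
  by rewrite -separable_prod_XsubC -Xm1E separable_Xn_sub_1 // pnatr_eq0 -lt0n.
- by rewrite /= -(size_prod_XsubC rs id) -Xm1E -polyC1 size_XnsubC.
- by move=> x; rewrite in_cons mem_rs.
Qed.

Section NormalCoefs.
Variables (l m : nat) (r : 'I_l -> C).
Hypothesis r_neq0 : forall i, r i != 0.

Definition normal_coefs (y : 'I_l -> C) := exists p : 'I_l,
  [/\ y p * r p = 1, forall i : 'I_l, (p < i)%N -> y i = 0
    & forall i, y i != 0 -> (y i * r i) ^+ m = 1].

Lemma normal_coefs_scale y y' c : normal_coefs y -> normal_coefs y' ->
  (forall i, y' i = c * y i) -> y =1 y'.
Proof.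
move=> [p [yp yp_last _]] [p' [yp' yp'_last _]] y'E.
have c_neq0 : c != 0.
  by apply: contraTneq (mul_eq1_neq0 yp') => c0; rewrite y'E c0 mul0r eqxx.
have pp' : p = p'.
  apply: (last_nonzero_unique (mul_eq1_neq0 yp) yp_last).
    by move: (mul_eq1_neq0 yp'); rewrite y'E mulf_eq0 negb_or => /andP[].
  by move=> i /yp'_last /eqP; rewrite y'E mulf_eq0 (negbTE c_neq0) => /eqP.
have c1 : c = 1 by move: yp'; rewrite -pp' y'E -mulrA yp mulr1.
by move=> i; rewrite y'E c1 mul1r.
Qed.

Lemma normalize_coefs z mu : (exists i, z i != 0) ->
  (forall i, z i != 0 -> (z i * r i) ^+ m = mu) ->
  exists2 c, c != 0 & normal_coefs (fun i => z i / c).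
Proof.
move=> [i0 zi0] z_root.
have [p zp p_max] := @arg_maxnP _ i0 (fun i => z i != 0) val zi0.
have c_neq0 : z p * r p != 0 by rewrite mulf_neq0.
exists (z p * r p) => //; exists p; split.
- by rewrite mulrAC divff.
- move=> i lt_pi; apply/eqP; rewrite mulf_eq0; apply/orP; left.
  by apply: contraTT lt_pi => /p_max; rewrite -leqNgt.
- move=> i; rewrite mulf_eq0 invr_eq0 (negbTE c_neq0) orbF => zi.
  rewrite mulrAC exprMn exprVn (z_root _ zi) (z_root _ zp) mulfV // -(z_root _ zp).
  exact: expf_neq0.
Qed.

Lemma yvec_iota k (iota : 'I_k -> 'I_l) eta j :
  (forall j j' : 'I_k, (j < j')%N -> (iota j < iota j')%N) ->
  yvec r iota eta (iota j) = (if (j < k.-1)%N then eta j else 1) / r (iota j).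
Proof.
move=> iota_mono; rewrite /yvec (big_pred1 j) // => j'.
apply/eqP/eqP => [iota_j'|-> //]; apply: val_inj.
by case: (ltngtP j' j) => // /iota_mono; rewrite iota_j' ltnn.
Qed.

Lemma yvec_notin k (iota : 'I_k -> 'I_l) eta i :
  (forall j, iota j != i) -> yvec r iota eta i = 0.
Proof.
by move=> iota_i; rewrite /yvec big_pred0 // => j; rewrite (negbTE (iota_i j)).
Qed.

Lemma admissible_normal_coefs k (iota : 'I_k -> 'I_l) eta :
  admissible m.+2 iota eta -> normal_coefs (yvec r iota eta).
Proof.
move=> [/andP[k_gt0 _] iota_mono]; rewrite subn2 => eta_root.
have kk : (k.-1 < k)%N by rewrite prednK.
pose jk := Ordinal kk.
exists (iota jk); split.
- by rewrite yvec_iota // ltnn mul1r mulVf.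
- move=> i lt_i; apply: yvec_notin => j; apply: contraTneq lt_i => <-.
  have : (j <= k.-1)%N by rewrite -ltnS prednK.
  rewrite -leqNgt leq_eqVlt => /orP[/eqP jE|/(iota_mono j jk)/ltnW //].
  by rewrite (_ : j = jk) //; apply: val_inj.
- move=> i; case: (pickP (fun j => iota j == i)) => [j /eqP <-|iota_i]; last first.
    by rewrite yvec_notin ?eqxx // => j; rewrite iota_i.
  rewrite yvec_iota // mulfVK // => _.
  by case: ifP => [/eta_root|_]; last exact: expr1n.
Qed.

Lemma normal_coefs_admissible y : normal_coefs y ->
  exists k (iota : 'I_k -> 'I_l) (eta : nat -> C),
    admissible m.+2 iota eta /\ yvec r iota eta =1 y.
Proof.
move=> [p [yp yp_last y_root]].
pose s := [seq i <- enum 'I_l | y i != 0].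
have mem_s i : (i \in s) = (y i != 0) by rewrite mem_filter mem_enum andbT.
have ltn_trans_ord : transitive (fun i j : 'I_l => (i < j)%N).
  by move=> ? ? ?; apply: ltn_trans.
have s_sorted : sorted (fun i j : 'I_l => (i < j)%N) s.
  apply: sorted_filter => //.
  by have := iota_ltn_sorted 0 l; rewrite -val_enum_ord sorted_map.
pose k := size s; pose iota (j : 'I_k) := nth p s j.
pose eta j := y (nth p s j) * r (nth p s j).
have p_in_s : p \in s by rewrite mem_s (mul_eq1_neq0 yp).
have k_gt0 : (0 < k)%N by rewrite lt0n size_eq0; apply: contraTneq p_in_s => ->.
have iota_mono (j j' : 'I_k) : (j < j')%N -> (iota j < iota j')%N.
  by apply: (sorted_ltn_nth ltn_trans_ord p s_sorted); rewrite inE ltn_ord.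
have y_iota (j : 'I_k) : y (iota j) != 0 by rewrite -mem_s mem_nth.
have iota_lastE (j : 'I_k) : ~~ (j < k.-1)%N -> iota j = p.
  rewrite -leqNgt => le_j.
  have p_idx : (index p s < k)%N by rewrite index_mem.
  have : (index p s <= j)%N by rewrite (leq_trans _ le_j) // -ltnS prednK.
  rewrite /iota leq_eqVlt => /orP[/eqP <-|lt_pj]; first by rewrite nth_index.
  have := sorted_ltn_nth ltn_trans_ord p s_sorted _ _ p_idx (ltn_ord j) lt_pj.
  by rewrite nth_index // => /yp_last /eqP; rewrite (negbTE (y_iota j)).
exists k, iota, eta; split.
  split=> // [|j lt_j].
    by rewrite k_gt0 /k size_filter (leq_trans (count_size _ _)) ?size_enum_ord.
  rewrite subn2; apply: y_root.
  by rewrite -mem_s mem_nth // (leq_trans lt_j) ?leq_pred.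
move=> i; have [yi0|yi] := eqVneq (y i) 0.
  by rewrite yi0 yvec_notin // => j; apply: contraNneq (y_iota j) => ->; rewrite yi0.
have i_idx : (index i s < k)%N by rewrite index_mem mem_s.
have iotaE : iota (Ordinal i_idx) = i by rewrite /iota nth_index ?mem_s.
rewrite -{1}iotaE yvec_iota // iotaE; case: ifP => [_|/negbT/iota_lastE].
  by rewrite /eta nth_index ?mem_s // mulfK.
by rewrite iotaE => ->; rewrite -yp mulfK.
Qed.

Section Codes.
Variable s : seq C.
Hypothesis mem_s : forall x, (x \in s) = (x == 0) || (x ^+ m == 1).

Local Notation coefs_code := {p : 'I_l & {ffun 'I_p -> seq_sub s}}.

(* The code (p, g) of a normalized vector y: p is the last nonzero position
   and g j records y_j r_j, which is 0 or an m-th root of unity, for j < p. *)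
Definition decode_coefs (c : coefs_code) (i : 'I_l) : C :=
  let: existT p g := c in
  if insub (val i) : option 'I_p is Some j then val (g j) / r i
  else if i == p then (r i)^-1 else 0.

Lemma decode_coefs_last (p : 'I_l) (g : {ffun 'I_p -> seq_sub s}) :
  decode_coefs (existT _ p g) p * r p = 1 /\
  forall i : 'I_l, (p < i)%N -> decode_coefs (existT _ p g) i = 0.
Proof.
rewrite /decode_coefs; split; first by rewrite insubF ?ltnn // eqxx mulVf.
by move=> i lt_pi; rewrite insubF ?ltnNge ?(ltnW lt_pi) // -val_eqE (gtn_eqF lt_pi).
Qed.

Lemma decode_coefs_normal c : normal_coefs (decode_coefs c).
Proof.
case: c => p g; have [yp yp_last] := decode_coefs_last g; exists p; split=> // i.
rewrite /decode_coefs; case: insubP => [j _ _|_].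
  rewrite mulf_eq0 invr_eq0 (negbTE (r_neq0 i)) orbF divfK // => gj.
  by have := ssvalP (g j); rewrite mem_s (negbTE gj) => /eqP.
have [->|_] := eqVneq i p; last by rewrite mul0r eqxx.
by rewrite mulVf // expr1n.
Qed.

Lemma decode_coefs_inj c c' : decode_coefs c =1 decode_coefs c' -> c = c'.
Proof.
case: c c' => [p g] [p' g'] eq_y.
have [yp yp_last] := decode_coefs_last g.
have [yp' yp'_last] := decode_coefs_last g'.
have pp' : p = p'.
  apply: (last_nonzero_unique (mul_eq1_neq0 yp) yp_last).
    by rewrite eq_y (mul_eq1_neq0 yp').
  by move=> i /yp'_last; rewrite eq_y.
subst p'; congr existT; apply/ffunP => j; apply: val_inj.
have := eq_y (widen_ord (ltnW (ltn_ord p)) j); rewrite /decode_coefs valK.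
exact/mulIf/invr_neq0.
Qed.

Lemma decode_coefs_onto y : normal_coefs y -> exists c, decode_coefs c =1 y.
Proof.
move=> [p [yp yp_last y_root]].
have yr_in_s i : y i * r i \in s.
  rewrite mem_s; have [->|yi] := eqVneq (y i) 0; first by rewrite mul0r eqxx.
  by rewrite y_root // eqxx orbT.
exists (existT _ p [ffun j => SeqSub (yr_in_s (widen_ord (ltnW (ltn_ord p)) j))]).
move=> i; rewrite /decode_coefs; case: insubP => [j _ ji|].
  by rewrite ffunE (_ : widen_ord _ j = i) ?mulfK //; apply: val_inj.
rewrite -leqNgt leq_eqVlt => /orP[/eqP pi|lt_pi].
  by rewrite (_ : i = p) ?eqxx; [rewrite -[_^-1]mul1r -yp mulfK | apply: val_inj].
by rewrite yp_last // -val_eqE (gtn_eqF lt_pi).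
Qed.

Lemma card_coefs_code : uniq s -> #|{: coefs_code}| = (\sum_(p < l) size s ^ p)%N.
Proof.
move=> s_uniq; rewrite card_tagged sumnE big_map big_enum /=.
by apply: eq_bigr => p _; rewrite card_ffun card_seq_sub // card_ord.
Qed.

End Codes.

Lemma normal_coefs_enum : (0 < m)%N ->
  exists f : 'I_(((m.+1) ^ l - 1) %/ m) -> 'I_l -> C,
  [/\ forall q, normal_coefs (f q), forall q q', f q =1 f q' -> q = q'
    & forall y, normal_coefs y -> exists q, f q =1 y].
Proof.
move=> m_gt0; have [s [s_uniq size_s mem_s]] := unity_roots_with0 m_gt0.
have card_code :
    (#|{: {p : 'I_l & {ffun 'I_p -> seq_sub s}}}| = ((m.+1) ^ l - 1) %/ m)%N.
  by rewrite card_coefs_code // size_s -geometric_sumn mulKn.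
exists (fun q => decode_coefs (enum_val (cast_ord (esym card_code) q))); split.
- by move=> q; apply: decode_coefs_normal.
- by move=> q q' /decode_coefs_inj /enum_val_inj /cast_ord_inj.
- move=> y /(decode_coefs_onto mem_s) [c cE].
  by exists (cast_ord card_code (enum_rank c)); rewrite cast_ordK enum_rankK.
Qed.

End NormalCoefs.

Section RankOneSumEigenvectors.
Variables (l n m : nat) (V : 'M[R]_(l, n)) (lam : 'I_l -> R) (r : 'I_l -> C).
Hypothesis V_orth : V *m V^T = 1%:M.
Hypothesis lam_neq0 : forall i, lam i != 0.
Hypothesis r_root : forall i, r i ^+ m = rc (lam i).
Local Notation T := (rank1_sum_tensor lam V).

Lemma root_neq0 i : (0 < m)%N -> r i != 0.
Proof.
move=> m_gt0; apply: contraTneq (lam_neq0 i) => ri0.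
by rewrite -rc_eq0 -r_root ri0 expr0n eqn0Ngt m_gt0 /= eqxx.
Qed.

Lemma comb_rows_eigenvector y : (exists i, y i != 0) ->
  (forall i, y i != 0 -> (y i * r i) ^+ m = 1) ->
  is_eigenvector m.+2 T (comb_rows V y).
Proof.
move=> y_neq0 y_root; split; first exact: comb_rows_neq0.
exists 1 => a; rewrite tensor_apply_rank1_sum mul1r; apply: eq_bigr => i _.
rewrite proj_comb_rows //; congr (_ * _).
have [->|yi] := eqVneq (y i) 0; first by rewrite expr0n mulr0.
by rewrite -r_root exprSr mulrA -exprMn [r i * y i]mulrC y_root // mul1r.
Qed.

Lemma nullspace_eigenvector w :
  (exists a, w a != 0) -> in_nullspace V w -> is_eigenvector m.+2 T w.
Proof.
move=> w_neq0 Vw0; split=> //; exists 0 => a.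
rewrite tensor_apply_rank1_sum mul0r /comb_rows big1 // => i _.
by rewrite [proj_rows _ _ _]Vw0 expr0n mulr0 mulr0.
Qed.

Lemma eigenvector_coefs w : is_eigenvector m.+2 T w ->
  in_nullspace V w \/ w =1 comb_rows V (proj_rows V w) /\
  exists mu, forall i, proj_rows V w i != 0 -> (proj_rows V w i * r i) ^+ m = mu.
Proof.
move=> [_ [mu Tw]]; set z := proj_rows V w.
pose q i := rc (lam i) * z i ^+ m.+1.
have qE a : comb_rows V q a = mu * w a by rewrite -Tw tensor_apply_rank1_sum.
have q_mu i : q i = mu * z i.
  rewrite -(proj_comb_rows V_orth q) -proj_rowsZ.
  by apply: eq_bigr => a _; rewrite qE.
have [mu0|mu_neq0] := eqVneq mu 0.
  left => i; apply/eqP; have /eqP := q_mu i.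
  by rewrite mu0 mul0r mulf_eq0 rc_eq0 (negbTE (lam_neq0 i)) expf_eq0.
right; split=> [a|]; last first.
  exists mu => i zi; apply: (mulIf zi).
  by rewrite -q_mu /q exprMn r_root exprS; ring.
apply: (mulfI mu_neq0); rewrite -qE -comb_rowsZ.
by apply: eq_bigr => i _; rewrite q_mu.
Qed.

Lemma eigenvector_normal_or_null w : (0 < m)%N -> is_eigenvector m.+2 T w ->
  (exists2 y, normal_coefs m r y & parallel (comb_rows V y) w) \/ in_nullspace V w.
Proof.
move=> m_gt0 w_eig; have [[a wa] _] := w_eig.
case: (eigenvector_coefs w_eig) => [|[wE [mu z_root]]]; [by right | left].
have z_neq0 : exists i, proj_rows V w i != 0.
  apply/existsP; apply: contraNT wa; rewrite negb_exists => /forallP z0.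
  by rewrite wE /comb_rows big1 // => i _; rewrite (eqP (negbNE (z0 i))) mulr0.
have [c c_neq0 y_normal] := normalize_coefs (root_neq0^~ m_gt0) z_neq0 z_root.
exists (fun i => proj_rows V w i / c) => //; exists c; split=> // b.
by rewrite wE -comb_rowsZ; apply: eq_bigr => i _; rewrite [c * _]mulrC divfK.
Qed.

Lemma normal_coefs_wvec y : (0 < m)%N -> normal_coefs m r y ->
  exists k (iota : 'I_k -> 'I_l) (eta : nat -> C),
    admissible m.+2 iota eta /\ wvec V r iota eta = comb_rows V y.
Proof.
move=> m_gt0 /(normal_coefs_admissible (root_neq0^~ m_gt0)).
move=> [k [iota [eta [adm yE]]]].
by exists k, iota, eta; split=> //; apply: eq_comb_rows.
Qed.

Lemma parallel_normal_coefs y y' : normal_coefs m r y -> normal_coefs m r y' ->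
  parallel (comb_rows V y) (comb_rows V y') -> y =1 y'.
Proof.
move=> y_normal y'_normal /(parallel_comb_rows V_orth) [c _ y'E].
exact: normal_coefs_scale y_normal y'_normal y'E.
Qed.

End RankOneSumEigenvectors.

End TensorEigenvectors.

Unset Implicit Arguments.
Theorem theorem2p3 (R : realType) (d n l : nat) (V : 'M[R]_(l, n))
  (lam : 'I_l -> R) (r : 'I_l -> R[i]) :
  (3 <= d)%N -> (1 <= n)%N -> (1 <= l)%N -> (l <= n)%N ->
  V *m V^T = 1%:M ->
  (forall i, lam i != 0) ->
  (forall i, r i ^+ (d - 2) = rc (lam i)) ->
  let T := rank1_sum_tensor lam V in
  (* each w is an eigenvector *)
  (forall k (iota : 'I_k -> 'I_l) (eta : nat -> R[i]),
      admissible d iota eta -> is_eigenvector d T (wvec V r iota eta)) /\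
  (* up to scaling, they are exactly ((d-1)^l - 1)/(d-2) distinct vectors *)
  (exists f : 'I_(((d.-1) ^ l - 1) %/ (d - 2)) -> ('I_n -> R[i]),
      (forall m, exists k (iota : 'I_k -> 'I_l) (eta : nat -> R[i]),
          admissible d iota eta /\ f m = wvec V r iota eta) /\
      (forall m m', parallel (f m) (f m') -> m = m') /\
      (forall k (iota : 'I_k -> 'I_l) (eta : nat -> R[i]),
          admissible d iota eta -> exists m, parallel (wvec V r iota eta) (f m))) /\
  (* every eigenvector is, up to scaling, one of them or in the nullspace *)
  (forall w : 'I_n -> R[i], is_eigenvector d T w ->
      (exists k (iota : 'I_k -> 'I_l) (eta : nat -> R[i]),
          admissible d iota eta /\ parallel (wvec V r iota eta) w)
      \/ in_nullspace V w) /\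
  (* nonzero nullspace elements are eigenvectors *)
  (forall w : 'I_n -> R[i], (exists a, w a != 0) -> in_nullspace V w ->
      is_eigenvector d T w).
Proof.
move=> d_ge3 _ _ _ V_orth lam_neq0; case: d d_ge3 => [|[|[|m]]] // _.
rewrite subn2 => r_root T.
have r_neq0 i : r i != 0 := root_neq0 lam_neq0 r_root i (ltn0Sn m).
have normal_wvec := normal_coefs_wvec V lam_neq0 r_root (ltn0Sn m).
split; [|split; [|split]].
- move=> k iota eta /(admissible_normal_coefs r_neq0) [p [yp _ y_root]].
  exact: comb_rows_eigenvector (ex_intro _ p (mul_eq1_neq0 yp)) y_root.
- have [f [f_normal f_inj f_onto]] := normal_coefs_enum r_neq0 (ltn0Sn m).
  exists (fun q => comb_rows V (f q)); split; [|split].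
  + move=> q; have [k [iota [eta [adm wE]]]] := normal_wvec _ (f_normal q).
    by exists k, iota, eta; rewrite wE.
  + move=> q q'; move/(parallel_normal_coefs V_orth (f_normal q) (f_normal q')).
    exact: f_inj.
  + move=> k iota eta /(admissible_normal_coefs r_neq0) /f_onto [q fE].
    by exists q, 1; split=> [|a]; rewrite ?oner_neq0 // mul1r (eq_comb_rows V fE).
- move=> w /(eigenvector_normal_or_null V_orth lam_neq0 r_root (ltn0Sn m)).
  case=> [[y /normal_wvec [k [iota [eta [adm wE]]]] yw]|]; [left | by right].
  by exists k, iota, eta; rewrite wE.
- by move=> w; apply: nullspace_eigenvector.
Qed.
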